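(* Let $k\le m$ and $l\le n$ be positive integers, and let $e$ denote all-ones vectors (of length $m$ in $ke$ and of length $n$ in $le$). The class $\mathcal{C}_{m,n}(ke,le)$ is nonempty if and only if $m=pl$ and $n=pk$ for some integer $p$.
   Context: $\mathcal{C}_{m,n}(R,S)$ denotes the set of $m\times n$ $(0,1)$-matrices with row sum vector $R$ and column sum vector $S$ that are convex, i.e. in every row and every column the 1's occur in consecutive positions. Thus $\mathcal{C}_{m,n}(ke,le)$ consists of the convex $m\times n$ $(0,1)$-matrices with every row sum equal to $k$ and every column sum equal to $l$. *)

From mathcomp Require Import all_boot all_algebra.
Set Implicit Arguments. Unset Strict Implicit. Unset Printing Implicit Defensive.

(* A (0,1)-matrix is represented as a boolean matrix: entry true = 1. *)

Definition row_sum m n (A : 'M[bool]_(m, n)) (i : 'I_m) : nat :=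
  \sum_(j < n) (A i j : nat).
Definition col_sum m n (A : 'M[bool]_(m, n)) (j : 'I_n) : nat :=
  \sum_(i < m) (A i j : nat).

Definition row_convex m n (A : 'M[bool]_(m, n)) : Prop :=
  forall (i : 'I_m) (j1 j j2 : 'I_n),
    j1 <= j -> j <= j2 -> A i j1 -> A i j2 -> A i j.
Definition col_convex m n (A : 'M[bool]_(m, n)) : Prop :=
  forall (j : 'I_n) (i1 i i2 : 'I_m),
    i1 <= i -> i <= i2 -> A i1 j -> A i2 j -> A i j.
Definition convex m n (A : 'M[bool]_(m, n)) : Prop :=
  row_convex A /\ col_convex A.

Definition in_C m n (R : 'I_m -> nat) (S : 'I_n -> nat) (A : 'M[bool]_(m, n)) : Prop :=
  convex A /\ (forall i, row_sum A i = R i) /\ (forall j, col_sum A j = S j).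

Definition C_nonempty m n (R : 'I_m -> nat) (S : 'I_n -> nat) : Prop :=
  exists A : 'M[bool]_(m, n), in_C R S A.

From mathcomp Require Import all_boot all_algebra.
From mathcomp Require Import zify.

(* By row convexity each row is a window of k consecutive ones.  Sweep the
   columns from left to right: if c = tk and the earlier columns are covered
   only by windows of the blocks [sk, (s+1)k) with s < t, then every row with
   a one in column c has its window starting at c, so column c is contained
   in each of the columns c, ..., c+k-1; all column sums being equal, these
   columns have the same support.  Hence the windows tile the columns into
   the blocks [tk, (t+1)k) and k divides n.  Transposing, l divides m, and
   counting the ones by rows and by columns (mk = nl) identifies the two
   quotients.  Conversely, the block diagonal matrix of p all-ones l x k
   blocks lies in the class. *)

Definition ones_consecutive {n} (r : 'I_n -> bool) : Prop :=
  forall j1 j j2 : 'I_n, j1 <= j -> j <= j2 -> r j1 -> r j2 -> r j.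

Lemma sum_nat_interval n a b :
  \sum_(j < n) ((a <= j < b) : nat) = minn n b - a.
Proof.
elim: n => [|n IHn]; first by rewrite big_ord0 min0n.
by rewrite big_ord_recr /= IHn; case: (leqP a n); case: (ltnP n b) => /=; lia.
Qed.

Lemma eqn_divn_range j k b : 0 < k -> (j %/ k == b) = (b * k <= j < b.+1 * k).
Proof.
move=> k_gt0; apply/eqP/andP => [<-|[le_bk_j lt_j_bk]].
  by split; [apply: leq_divM | apply: ltn_ceil].
by apply/eqP; rewrite eqn_leq leq_divRL // le_bk_j andbT -ltnS ltn_divLR.
Qed.

Lemma sum_block n k b : 0 < k ->
  \sum_(j < n) ((j %/ k == b) : nat) = minn n (b.+1 * k) - b * k.
Proof.
move=> k_gt0; under eq_bigr do rewrite eqn_divn_range //.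
exact: sum_nat_interval.
Qed.

Lemma consecutive_block n k b : ones_consecutive (fun j : 'I_n => j %/ k == b).
Proof.
move=> j1 j j2 le_j1j le_jj2 /eqP j1_b /eqP j2_b.
by rewrite eqn_leq -{1}j2_b -j1_b !leq_div2r.
Qed.

Lemma consecutive_window {n k} {r : 'I_n -> bool} {c : 'I_n} :
  ones_consecutive r -> \sum_(j < n) (r j : nat) = k -> r c ->
  (forall j : 'I_n, j < c -> ~~ r j) -> forall j : 'I_n, r j = (c <= j < c + k).
Proof.
move=> conv_r sum_r rc r_before_c.
have [d rd max_d] := arg_maxnP (fun j : 'I_n => j) rc.
have r_window j : r j = (c <= j < d.+1).
  apply/idP/andP => [rj | [le_cj le_jd]]; last exact: conv_r rc rd.
  split; last exact: max_d.
  by rewrite leqNgt; apply: contraL rj => /r_before_c.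
have le_cd : c <= d by have /andP[] : c <= d < d.+1 by rewrite -r_window.
have d_end : d.+1 = c + k.
  move: sum_r; under eq_bigr do rewrite r_window.
  by rewrite sum_nat_interval; have := ltn_ord d; lia.
by move=> j; rewrite r_window d_end.
Qed.

Lemma sum_nat_eq_subpred {I : finType} {f g : pred I} :
  subpred f g -> \sum_i (f i : nat) = \sum_i (g i : nat) -> subpred g f.
Proof.
have card_sum (h : pred I) : \sum_i (h i : nat) = #|h|.
  by rewrite -sum1_card [RHS]big_mkcond.
move=> fg; rewrite !card_sum => /eqP card_fg; apply/subsetP.
by rewrite -(subset_leqif_card (B := g)) //; apply/subsetP.
Qed.

Section RowConvexWidth.

Context {m n k l : nat} {A : 'M[bool]_(m, n)}.
Hypotheses (k_gt0 : 0 < k) (rconvA : row_convex A).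
Hypotheses (rsA : forall i, row_sum A i = k) (csA : forall j, col_sum A j = l).

Lemma row_block {i : 'I_m} {j : 'I_n} :
  A i j -> forall j' : 'I_n, A i j' = (j' %/ k == j %/ k).
Proof.
have [s] := ubnP j; elim: s => // s IHs in i j *; rewrite ltnS => le_js Aij.
have lt_cn : j %/ k * k < n by apply: leq_ltn_trans (leq_divM j k) _.
pose c : 'I_n := Ordinal lt_cn.
have c_block : c %/ k = j %/ k by rewrite mulnK.
have row_c i' : A i' c -> forall j' : 'I_n, A i' j' = (j' %/ k == j %/ k).
  move=> Ai'c; have before_c (j' : 'I_n) : j' < c -> ~~ A i' j'.
    move=> lt_j'c; apply: contraTN Ai'c => Ai'j'.
    have lt_j's : j' < s by apply: leq_trans lt_j'c (leq_trans (leq_divM j k) le_js).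
    rewrite (IHs i' j' lt_j's Ai'j') c_block eq_sym.
    by rewrite neq_ltn ltn_divLR // lt_j'c.
  move=> j'; rewrite (consecutive_window (rconvA i') (rsA i') Ai'c before_c).
  by rewrite eqn_divn_range // mulSn addnC.
have col_c_sub_j : subpred (fun i' => A i' c) (fun i' => A i' j).
  by move=> i' /row_c ->.
have sum_cj : col_sum A c = col_sum A j by rewrite !csA.
exact: row_c (sum_nat_eq_subpred col_c_sub_j sum_cj _ Aij).
Qed.

Lemma dvdn_width : 0 < l -> k %| n.
Proof.
move=> l_gt0; have [->|n_gt0] := posnP n; first exact: dvdn0.
have lt_last : n.-1 < n by rewrite ltn_predL.
pose j_last : 'I_n := Ordinal lt_last.
have : col_sum A j_last != 0 by rewrite csA -lt0n.
rewrite /col_sum sum_nat_eq0 => /forallPn[i].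
rewrite implyTb -lt0n lt0b => Ai_jlast.
have := rsA i; rewrite /row_sum.
under eq_bigr do rewrite (row_block Ai_jlast).
rewrite sum_block // => window.
have end_last := ltn_ceil n.-1 k_gt0.
apply/dvdnP; exists (n.-1 %/ k).+1; move: window end_last; rewrite !mulSn; lia.
Qed.

End RowConvexWidth.

Lemma row_sum_tr m n (A : 'M[bool]_(m, n)) j : row_sum A^T j = col_sum A j.
Proof. by apply: eq_bigr => i _; rewrite mxE. Qed.

Lemma col_sum_tr m n (A : 'M[bool]_(m, n)) i : col_sum A^T i = row_sum A i.
Proof. by apply: eq_bigr => j _; rewrite mxE. Qed.

Lemma row_convex_tr {m n} {A : 'M[bool]_(m, n)} : col_convex A -> row_convex A^T.
Proof. by move=> cconvA j i1 i i2; rewrite !mxE; apply: cconvA. Qed.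

Lemma double_count_const {m n} {A : 'M[bool]_(m, n)} {r s} :
  (forall i, row_sum A i = r) -> (forall j, col_sum A j = s) -> m * r = n * s.
Proof.
move=> rsA csA.
have : \sum_i row_sum A i = \sum_j col_sum A j by apply: exchange_big.
rewrite (eq_bigr _ (fun i _ => rsA i)) (eq_bigr _ (fun j _ => csA j)).
by rewrite !sum_nat_const !card_ord.
Qed.

Definition block_ones_mx p k l : 'M[bool]_(p * l, p * k) :=
  \matrix_(i, j) (i %/ l == j %/ k).

Lemma sum_block_full p q d (x : 'I_(p * q)) : 0 < d ->
  \sum_(y < p * d) ((y %/ d == x %/ q) : nat) = d.
Proof.
move=> d_gt0; rewrite sum_block //.
have /andP[_ q_gt0] : (0 < p) && (0 < q).
  by rewrite -muln_gt0; apply: leq_ltn_trans (ltn_ord x).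
have lt_xq : x %/ q < p by rewrite ltn_divLR.
have : (x %/ q).+1 * d <= p * d by rewrite leq_mul2r lt_xq orbT.
by rewrite mulSn; lia.
Qed.

Lemma block_ones_mx_in_C p k l : 0 < k -> 0 < l ->
  in_C (fun _ => k) (fun _ => l) (block_ones_mx p k l).
Proof.
move=> k_gt0 l_gt0; split; [split | split].
- by move=> i j1 j j2; rewrite !mxE ![i %/ l == _]eq_sym; apply: consecutive_block.
- by move=> j i1 i i2; rewrite !mxE; apply: consecutive_block.
- move=> i; rewrite /row_sum; under eq_bigr do rewrite mxE eq_sym.
  exact: sum_block_full.
- move=> j; rewrite /col_sum; under eq_bigr do rewrite mxE.
  exact: sum_block_full.
Qed.

Theorem mainTheorem6 (m n k l : nat) :
  0 < k -> k <= m -> 0 < l -> l <= n ->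
  (C_nonempty (fun _ : 'I_m => k) (fun _ : 'I_n => l) <->
   exists p : nat, m = p * l /\ n = p * k).
Proof.
move=> k_gt0 _ l_gt0 _; split => [[A [[rconvA cconvA] [rsA csA]]] | [p [-> ->]]].
- have /dvdnP[q def_n] := dvdn_width k_gt0 rconvA rsA csA l_gt0.
  have rsAT j : row_sum A^T j = l by rewrite row_sum_tr.
  have csAT i : col_sum A^T i = k by rewrite col_sum_tr.
  have /dvdnP[p def_m] := dvdn_width l_gt0 (row_convex_tr cconvA) rsAT csAT k_gt0.
  have := double_count_const rsA csA; rewrite def_m def_n => count.
  by exists p; split => //; nia.
- by exists (block_ones_mx p k l); apply: block_ones_mx_in_C.
Qed.
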